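(* Let $G$ be a graph with length-function $\ell$, let $k$ be a natural number and let $H\subseteq G$. If $H$ is not $k$-geodesic in $G$, then $G$ contains a subgraph $T$ which is a tree with at most $k$ leaves and which, with respect to the restriction of $\ell$ to $T\cup H$, is a shortcut tree for $H$.
   Context: All graphs are finite; parallel edges are allowed, loops are not. A length-function on a graph $G$ is a map $\ell:E(G)\to\mathbb{R}^+$ (strictly positive reals); for a subgraph $H$ put $\ell(H)=\sum_{e\in E(H)}\ell(e)$, and subgraphs carry the restricted length-function. For $A\subseteq V(G)$, the Steiner distance $\mathrm{sd}_G(A)$ is the minimum of $\ell(S)$ over all connected subgraphs $S\subseteq G$ with $A\subseteq V(S)$ ($\infty$ if none exists). A subgraph $H\subseteq G$ is $k$-geodesic in $G$ if $\mathrm{sd}_H(A)=\mathrm{sd}_G(A)$ for every $A\subseteq V(H)$ with $|A|\le k$. $L(T)$ denotes the set of leaves of a tree $T$. Shortcut tree: let $H$ be a graph, $T$ a tree, both subgraphs of the graph $T\cup H$, and $\ell$ a length-function on $T\cup H$. Then $T$ is a shortcut tree for $H$ if (SCT1) $V(T)\cap V(H)=L(T)$; (SCT2) $E(T)\cap E(H)=\emptyset$; (SCT3) $\ell(T)<\mathrm{sd}_H(L(T))$; (SCT4) for every proper subset $B\subsetneq L(T)$ we have $\mathrm{sd}_H(B)\le \mathrm{sd}_T(B)$. *)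

(* Finite multigraphs: vertex type V, edge type E (both finite),
   endpoint map [ends : E -> V * V]; loops excluded by a hypothesis of the theorem.
   The ambient graph G is the whole (V, E, ends); subgraphs are pairs
   (vertex set, edge set) whose edges have both endpoints in the vertex set. *)
From HB Require Import structures.
From mathcomp Require Import all_boot all_order all_algebra.
Set Implicit Arguments. Unset Strict Implicit. Unset Printing Implicit Defensive.
Import Order.TTheory GRing.Theory Num.Theory.
Local Open Scope ring_scope.

Section Graphs.
Variables (R : realFieldType) (V E : finType) (ends : E -> V * V) (l : E -> R).

Definition sg := ({set V} * {set E})%type.

Definition Gfull : sg := (setT, setT).

Definition joins (e : E) (x y : V) : bool :=
  (ends e == (x, y)) || (ends e == (y, x)).

Definition wf (S : sg) : bool :=
  [forall e in S.2, ((ends e).1 \in S.1) && ((ends e).2 \in S.1)].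

Definition subg (S H : sg) : bool :=
  [&& wf S, S.1 \subset H.1 & S.2 \subset H.2].

Definition adj (S : sg) : rel V := fun x y => [exists e in S.2, joins e x y].

Definition connectedb (S : sg) : bool :=
  [forall u in S.1, forall v in S.1, connect (adj S) u v].

Definition len (S : sg) : R := \sum_(e in S.2) l e.

Definition cand (H : sg) (A : {set V}) (S : sg) : bool :=
  [&& subg S H, connectedb S & A \subset S.1].

(* Steiner distance: Some (minimum of l(S) over candidates), None = infinity *)
Definition sd (H : sg) (A : {set V}) : option R :=
  omap len [pick S : sg | cand H A S && [forall S' : sg, cand H A S' ==> (len S <= len S')]].

Definition ole (x y : option R) : bool :=
  match x, y with
  | _, None => true
  | None, Some _ => false
  | Some a, Some b => a <= b
  end.
Definition olt (x y : option R) : bool :=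
  match x, y with
  | None, _ => false
  | Some _, None => true
  | Some a, Some b => a < b
  end.

Definition k_geodesic (k : nat) (H G : sg) : Prop :=
  forall A : {set V}, A \subset H.1 -> (#|A| <= k)%N -> sd H A = sd G A.

Definition has_cycle (S : sg) : Prop :=
  exists (vs : seq V) (es : seq E),
    [/\ size vs = size es, (0 < size es)%N, uniq vs && uniq es,
        all (fun v => v \in S.1) vs && all (fun e => e \in S.2) es &
        forall (e0 : E) (v0 : V) (i : nat), (i < size es)%N ->
          joins (nth e0 es i) (nth v0 vs i) (nth v0 vs ((i.+1 %% size es)%N))].

Definition is_tree (T : sg) : Prop :=
  [/\ wf T, T.1 != set0, connectedb T & ~ has_cycle T].

Definition deg (S : sg) (v : V) : nat :=
  #|[set e in S.2 | ((ends e).1 == v) || ((ends e).2 == v)]|.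

Definition leaves (T : sg) : {set V} := [set v in T.1 | deg T v == 1%N].

(* T is a shortcut tree for H (l is the length function of the ambient graph,
   restricted to subgraphs) *)
Definition shortcut_tree (T H : sg) : Prop :=
  [/\ is_tree T,
      T.1 :&: H.1 = leaves T,
      T.2 :&: H.2 = set0,
      olt (Some (len T)) (sd H (leaves T))
    & forall B : {set V}, B \proper leaves T -> ole (sd H B) (sd T B)].

End Graphs.

(* Call (A, S) a shortcut if A is a set of at most k vertices of H and S is a
   connected subgraph of G containing A with l(S) < sd_H(A); one exists because H is
   not k-geodesic.  Take a shortcut (A, T) with the fewest edges.  No proper connected
   subgraph of T contains A, so T is a tree all of whose leaves lie in A.  A vertex of
   T that lies in H and is not a leaf cuts T into two pieces with fewer edges; by
   minimality H connects the terminals of each piece at no greater cost, and gluing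
   the two connections contradicts l(T) < sd_H(A).  Hence V(T) ∩ V(H) = A = L(T).
   Finally, deleting a leaf x of T gives a connector of any B ⊊ L(T) avoiding x with
   fewer edges, which H matches by minimality: this is (SCT4). *)

From HB Require Import structures.
From mathcomp Require Import all_boot all_order all_algebra.
Import Order.TTheory GRing.Theory Num.Theory.
Local Open Scope ring_scope.
Set Implicit Arguments. Unset Strict Implicit. Unset Printing Implicit Defensive.

Section Incidence.
Variables (V E : finType) (ends : E -> V * V).
Implicit Types (H S : sg V E) (A : {set V}) (e f g h : E) (a b u v w x y : V).

Definition incident e v := ((ends e).1 == v) || ((ends e).2 == v).

Definition other_end e v := if (ends e).1 == v then (ends e).2 else (ends e).1.

Definition sgU S1 S2 : sg V E := (S1.1 :|: S2.1, S1.2 :|: S2.2).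

Lemma joinsC e x y : joins ends e x y = joins ends e y x.
Proof. by rewrite /joins orbC. Qed.

Lemma joins_ends e : joins ends e (ends e).1 (ends e).2.
Proof. by rewrite /joins; case: (ends e) => ? ?; rewrite eqxx. Qed.

Lemma joins_incident e x y : joins ends e x y -> incident e x && incident e y.
Proof. by rewrite /joins /incident => /orP[]/eqP ->; rewrite !eqxx ?orbT. Qed.

Lemma incident_joins e x y w : joins ends e x y -> incident e w -> w = x \/ w = y.
Proof.
rewrite /joins /incident; case: (ends e) => c d /=.
by move=> /orP[]/eqP[-> ->] /orP[]/eqP ->; auto.
Qed.

Lemma joins_other_end e v : incident e v -> joins ends e v (other_end e v).
Proof.
rewrite /incident /other_end /joins; case: (ends e) => c d /=.
by case: eqVneq => [->|_] /=; [rewrite eqxx | move=> /eqP ->; rewrite eqxx orbT].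
Qed.

Lemma joins_eq e x y a b : joins ends e x y -> joins ends e a b ->
  (x = a /\ y = b) \/ (x = b /\ y = a).
Proof.
rewrite /joins; case: (ends e) => c d.
by move=> /orP[]/eqP[-> ->] /orP[]/eqP[-> ->]; auto.
Qed.

Lemma joins_mem e x y (X : {set V}) : joins ends e x y ->
  ((ends e).1 \in X) || ((ends e).2 \in X) = (x \in X) || (y \in X).
Proof. by rewrite /joins; case: (ends e) => c d /= /orP[]/eqP[-> ->] //; rewrite orbC. Qed.

Lemma adjC S : symmetric (adj ends S).
Proof.
by move=> x y; apply/existsP/existsP => -[e /andP[Se J]]; exists e; rewrite Se joinsC.
Qed.

Lemma connectC S x y : connect (adj ends S) x y = connect (adj ends S) y x.
Proof. exact: (sym_connect_sym (adjC S) x y). Qed.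

Lemma adj_subset S S' x y : S.2 \subset S'.2 -> adj ends S x y -> adj ends S' x y.
Proof.
move=> sub /existsP[e /andP[Se J]]; apply/existsP; exists e.
by rewrite J (subsetP sub).
Qed.

Lemma connect_subset S S' x y : S.2 \subset S'.2 ->
  connect (adj ends S) x y -> connect (adj ends S') x y.
Proof. by move=> sub; apply: connect_sub => a b /(adj_subset sub)/connect1. Qed.

Lemma wf_adj S x y : wf ends S -> adj ends S x y -> (x \in S.1) && (y \in S.1).
Proof.
move=> /forall_inP W /existsP[e /andP[Se J]].
have /andP[e1 e2] := W e Se.
by move: J; rewrite /joins => /orP[]/eqP E1; rewrite E1 /= in e1 e2; rewrite e1 e2.
Qed.

Lemma connectedb_from S c :
  (forall u, u \in S.1 -> connect (adj ends S) c u) -> connectedb ends S.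
Proof.
move=> Sc; apply/forall_inP => u Su; apply/forall_inP => v Sv.
by apply: connect_trans (Sc v Sv); rewrite connectC; apply: Sc.
Qed.

Lemma wf_sgU S1 S2 : wf ends S1 -> wf ends S2 -> wf ends (sgU S1 S2).
Proof.
move=> /forall_inP W1 /forall_inP W2; apply/forall_inP => e /=.
rewrite in_setU => /orP[/W1|/W2] /andP[e1 e2]; by rewrite !in_setU e1 e2 ?orbT.
Qed.

Lemma connected_sgU S1 S2 c : c \in S1.1 -> c \in S2.1 ->
  connectedb ends S1 -> connectedb ends S2 -> connectedb ends (sgU S1 S2).
Proof.
move=> c1 c2 /forall_inP C1 /forall_inP C2.
apply: (@connectedb_from _ c) => w /=; rewrite in_setU => /orP[w1|w2].
  apply: (connect_subset (S := S1)); [exact: subsetUl | exact: (forall_inP (C1 c c1))].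
apply: (connect_subset (S := S2)); [exact: subsetUr | exact: (forall_inP (C2 c c2))].
Qed.

Lemma cand_subset H A A' S : A' \subset A -> cand ends H A S -> cand ends H A' S.
Proof. by move=> A'A /and3P[HS CS AS]; rewrite /cand HS CS (subset_trans A'A AS). Qed.

Lemma cand_sgU H A1 A2 S1 S2 c : c \in S1.1 -> c \in S2.1 ->
  cand ends H A1 S1 -> cand ends H A2 S2 -> cand ends H (A1 :|: A2) (sgU S1 S2).
Proof.
move=> c1 c2 /and3P[/and3P[W1 V1 E1] C1 AS1] /and3P[/and3P[W2 V2 E2] C2 AS2].
rewrite /cand /subg wf_sgU // (connected_sgU c1 c2) // !subUset V1 V2 E1 E2 /=.
by rewrite (subset_trans AS1 (subsetUl _ _)) (subset_trans AS2 (subsetUr _ _)).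
Qed.

Lemma cand_edge H g : wf ends H -> g \in H.2 ->
  cand ends H [set (ends g).1; (ends g).2] ([set (ends g).1; (ends g).2], [set g]).
Proof.
move=> /forall_inP W Hg; have /andP[H1 H2] := W g Hg.
rewrite /cand /subg /= subxx sub1set Hg !subUset !sub1set H1 H2 !andbT; apply/andP; split.
  by apply/forall_inP => h; rewrite inE => /eqP->; rewrite !inE !eqxx orbT.
apply: (@connectedb_from _ (ends g).1) => w; rewrite !inE => /orP[]/eqP->.
  exact: connect0.
by apply/connect1/existsP; exists g; rewrite inE eqxx joins_ends.
Qed.

Lemma deg1_edge S x : deg ends S x = 1%N -> exists2 g, g \in S.2 & incident g x.
Proof.
move=> /eqP/cards1P[g Eg].
have : g \in [set e in S.2 | incident e x] by rewrite /incident Eg set11.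
by rewrite inE => /andP[Sg gx]; exists g.
Qed.

Lemma deg1_edge_uniq S x e f : deg ends S x = 1%N ->
  e \in S.2 -> incident e x -> f \in S.2 -> incident f x -> e = f.
Proof.
move=> /eqP/cards1P[g Eg] Se ex Sf fx.
have : e \in [set e in S.2 | incident e x] by rewrite inE Se.
have : f \in [set e in S.2 | incident e x] by rewrite inE Sf.
by rewrite /incident in Eg *; rewrite Eg !inE => /eqP -> /eqP ->.
Qed.

Lemma connect_delete_edge S g p q : joins ends g p q ->
  connect (adj ends (S.1, S.2 :\ g)) p q -> connectedb ends S ->
  connectedb ends (S.1, S.2 :\ g).
Proof.
move=> J Cpq /forall_inP C; apply/forall_inP => u Su; apply/forall_inP => v Sv.
apply: connect_sub (forall_inP (C u Su) v Sv) => a b /existsP[h /andP[Sh Jh]].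
case: (eqVneq h g) => [Ehg|Nhg].
  by subst h; case: (joins_eq J Jh) => -[<- <-] //; rewrite connectC.
by apply: connect1; apply/existsP; exists h; rewrite !inE Nhg Sh.
Qed.

Hypothesis noloop : forall e, (ends e).1 != (ends e).2.

Lemma joins_neq e x y : joins ends e x y -> x != y.
Proof.
have := noloop e; rewrite /joins => nl /orP[]/eqP E1; rewrite E1 /= in nl;
  by [|rewrite eq_sym].
Qed.

Lemma joins_uniq e x y z : joins ends e x y -> joins ends e x z -> y = z.
Proof.
have := noloop e; rewrite /joins; case: (ends e) => a b /= nl.
move=> /orP[]/eqP[<- <-] /orP[]/eqP[] //; try by move=> E1; rewrite E1 eqxx in nl.
by move=> E1 E2; subst; rewrite eqxx in nl.
Qed.

Lemma connected_deg_gt0 S v g : wf ends S -> connectedb ends S -> g \in S.2 ->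
  v \in S.1 -> (0 < deg ends S v)%N.
Proof.
move=> wfS /forall_inP C Sg Sv; have /andP[g1 g2] := forall_inP wfS g Sg.
have [w Sw wv] : exists2 w, w \in S.1 & w != v.
  case: (eqVneq (ends g).1 v) => [g1v|]; last by exists (ends g).1.
  by exists (ends g).2; rewrite // -g1v eq_sym noloop.
have /connectP[[|b p] /= P Ew] := forall_inP (C v Sv) w Sw; first by rewrite Ew eqxx in wv.
case/andP: P => /existsP[h /andP[Sh J]] _; apply/card_gt0P; exists h.
by rewrite inE Sh; case/andP: (joins_incident J).
Qed.

End Incidence.

Section Length.
Variables (R : realFieldType) (V E : finType) (l : E -> R).
Hypothesis lpos : forall e, 0 < l e.
Implicit Types (S : sg V E) (X Y : {set E}).

Lemma len_setID S X : len l S = \sum_(e in S.2 :&: X) l e + \sum_(e in S.2 :\: X) l e.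
Proof. exact: big_setID. Qed.

Lemma sum_subset_le X Y : X \subset Y -> \sum_(e in X) l e <= \sum_(e in Y) l e.
Proof.
move=> sub; rewrite [leRHS](big_setID X) (setIidPr sub) lerDl.
by apply: sumr_ge0 => e _; apply: ltW.
Qed.

Lemma len_proper S S' : S.2 \proper S'.2 -> len l S < len l S'.
Proof.
move=> /properP[sub [e S'e Se]].
rewrite (len_setID S' S.2) (setIidPr sub) ltrDl (bigD1 e) /=; last by rewrite inE S'e Se.
by apply: ltr_pwDl; [exact: lpos | apply: sumr_ge0 => i _; apply: ltW].
Qed.

Lemma len_sgU S1 S2 : len l (sgU S1 S2) <= len l S1 + len l S2.
Proof.
rewrite (len_setID _ S1.2) /= setIUl setIid setDUl setDv set0U.
rewrite (setUidPl (subsetIr _ _)) lerD2l.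
exact/sum_subset_le/subsetDl.
Qed.

End Length.

Section SteinerDistance.
Variables (R : realFieldType) (V E : finType) (ends : E -> V * V) (l : E -> R).
Implicit Types (H S : sg V E) (A : {set V}).

Definition sd_minimizer H A S :=
  cand ends H A S /\ forall S', cand ends H A S' -> len l S <= len l S'.

Lemma sd_Some H A m : sd ends l H A = Some m ->
  exists2 S, m = len l S & sd_minimizer H A S.
Proof.
rewrite /sd; case: pickP => //= S /andP[CS /forallP M] [<-].
by exists S => //; split => // S' CS'; apply: (implyP (M S')).
Qed.

Lemma sd_None H A S : sd ends l H A = None -> ~~ cand ends H A S.
Proof.
rewrite /sd; case: pickP => //= none _; apply/negP => CS.
have [S0 C0 min] := arg_minP (len l) CS.
have /negP := none S0; rewrite C0; apply; apply/forallP => S'; exact/implyP/min.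
Qed.

Lemma sd_attained H A S : cand ends H A S ->
  exists2 S0, sd ends l H A = Some (len l S0) & sd_minimizer H A S0.
Proof.
case E0: (sd ends l H A) => [m|] CS; last by rewrite (negbTE (sd_None S E0)) in CS.
by have [S0 -> min] := sd_Some E0; exists S0.
Qed.

Lemma le_olt_trans (a b : R) o : a <= b -> olt (Some b) o -> olt (Some a) o.
Proof. by case: o => //= m ab; apply: le_lt_trans. Qed.

Lemma nolt_Some (a : R) o : ~~ olt (Some a) o -> exists2 m, o = Some m & m <= a.
Proof. by case: o => //= m; rewrite -leNgt; exists m. Qed.

Lemma nolt_ole (a : R) o : ~~ olt (Some a) o -> ole o (Some a).
Proof. by case/nolt_Some => m ->. Qed.

End SteinerDistance.

Section Surgery.
Variables (V E : finType) (ends : E -> V * V).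
Hypothesis noloop : forall e, (ends e).1 != (ends e).2.
Implicit Types (S T : sg V E) (e f g h : E) (a b u v w x y : V).

Section DeleteLeaf.
Variables (S : sg V E) (x : V) (g : E).
Hypotheses (Sx1 : deg ends S x = 1%N) (Sg : g \in S.2) (gx : incident ends g x).

(* A walk through the leaf [x] must come straight back, so it can be shortened by
   two steps; hence the induction on a bound for the length. *)
Lemma connect_delete_leaf n p a : (size p <= n)%N -> path (adj ends S) a p ->
  a != x -> last a p != x -> connect (adj ends (S.1 :\ x, S.2 :\ g)) a (last a p).
Proof.
elim: n p a => [|n IH] [|b p] a //= sz /andP[ab P] ax px.
case: (eqVneq b x) => [bx|bx].
  subst b; case: p sz P px => [|c p] sz P px; first by rewrite /= eqxx in px.
  move: P => /= /andP[/existsP[h' /andP[Sh' J']] P].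
  move: ab => /existsP[h /andP[Sh J]].
  have /andP[_ hx] := joins_incident J; have /andP[h'x _] := joins_incident J'.
  rewrite (deg1_edge_uniq Sx1 Sh hx Sg gx) joinsC in J.
  rewrite (deg1_edge_uniq Sx1 Sh' h'x Sg gx) in J'.
  rewrite -(joins_uniq noloop J J') in P px *.
  by apply: IH => //; rewrite ltnW.
apply: connect_trans (IH p b sz P bx px) => {IH}.
move: ab => /existsP[h /andP[Sh J]]; apply/connect1/existsP; exists h.
rewrite !inE Sh J !andbT; apply: contraNneq bx => hg.
by subst h; case: (incident_joins J gx) => Ex; rewrite -Ex ?eqxx in ax *.
Qed.

Lemma wf_delete_leaf : wf ends S -> wf ends (S.1 :\ x, S.2 :\ g).
Proof.
move=> /forall_inP W; apply/forall_inP => h /=; rewrite !inE => /andP[hg Sh].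
have /andP[-> ->] := W h Sh; rewrite !andbT.
have : ~~ incident ends h x.
  by apply: contra hg => hx; rewrite (deg1_edge_uniq Sx1 Sh hx Sg gx).
by rewrite /incident negb_or => /andP[-> ->].
Qed.

Lemma connected_delete_leaf :
  connectedb ends S -> connectedb ends (S.1 :\ x, S.2 :\ g).
Proof.
move=> /forall_inP C; apply/forall_inP => a /=; rewrite !inE => /andP[ax Sa].
apply/forall_inP => b /=; rewrite !inE => /andP[bx Sb].
have /connectP[p P Eb] := forall_inP (C a Sa) b Sb.
by rewrite Eb; apply: (connect_delete_leaf (leqnn _)) => //; rewrite -Eb.
Qed.

End DeleteLeaf.

Lemma leaf_edge_spans S x y g : connectedb ends S -> x \in S.1 ->
  deg ends S x = 1%N -> deg ends S y = 1%N -> g \in S.2 -> joins ends g x y ->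
  S.1 \subset [set x; y].
Proof.
move=> /forall_inP C Sx Sx1 Sy1 Sg J; have /andP[gx gy] := joins_incident J.
have avoid p a : path (adj ends S) a p -> a != x -> a != y ->
    (last a p != x) && (last a p != y).
  elim: p a => [|b p IH] a /=; first by move=> _ -> ->.
  move=> /andP[/existsP[h /andP[Sh Jh]] P] ax ay.
  have /andP[_ hb] := joins_incident Jh.
  apply: IH => //; apply/eqP => Eb; subst b.
  - rewrite (deg1_edge_uniq Sx1 Sh hb Sg gx) joinsC in Jh.
    by rewrite (joins_uniq noloop Jh J) eqxx in ay.
  - rewrite (deg1_edge_uniq Sy1 Sh hb Sg gy) joinsC in Jh; rewrite joinsC in J.
    by rewrite (joins_uniq noloop Jh J) eqxx in ax.
apply/subsetP => w Sw; rewrite !inE; apply: contraT; rewrite negb_or => /andP[wx wy].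
have /connectP[p P Ex] := forall_inP (C w Sw) x Sx.
by have /andP[] := avoid p w P wx wy; rewrite -Ex eqxx.
Qed.

Lemma cycle_edge_redundant S : has_cycle ends S -> connectedb ends S ->
  exists2 g, g \in S.2 & connectedb ends (S.1, S.2 :\ g).
Proof.
move=> [vs [es [Esz es_gt0 /andP[_ Ue] /andP[_ Ses] J]]] CS.
case: es es_gt0 Esz Ue Ses J => // g es' _; set es := g :: es' => Esz Ue Ses J.
case: vs Esz J => // v vs'; set vs := v :: vs' => Esz J.
have Jg := J g v 0%N isT.
exists g; first by rewrite (allP Ses) ?mem_head.
apply: (connect_delete_edge Jg) CS.
have n_gt1 : (1 < size es)%N.
  rewrite ltnNge; apply/negP => n1; have n_eq1 : size es = 1%N by apply/eqP; rewrite eqn_leq n1.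
  by move: Jg; rewrite n_eq1 modnn => /(joins_neq noloop); rewrite eqxx.
have step i : (i.+1 < size es)%N ->
    adj ends (S.1, S.2 :\ g) (nth v vs i.+1) (nth v vs (i.+2 %% size es)).
  move=> lt; apply/existsP; exists (nth g es i.+1); rewrite J // andbT !inE.
  by rewrite (allP Ses) ?mem_nth // andbT -[g in _ != g]/(nth g es 0) nth_uniq.
have reach i : (i < size es)%N ->
    connect (adj ends (S.1, S.2 :\ g)) (nth v vs 1) (nth v vs (i.+1 %% size es)).
  elim: i => [|i IH] lt; first by rewrite (modn_small n_gt1).
  apply: connect_trans (IH (ltnW lt)) (connect1 _).
  by rewrite (modn_small lt); exact: step.
rewrite connectC (modn_small n_gt1).
by have := reach (size es).-1; rewrite prednK // modnn; apply.
Qed.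

Definition edge_minimal S := forall g, g \in S.2 -> ~~ connectedb ends (S.1, S.2 :\ g).

Lemma edge_minimal_acyclic S : connectedb ends S -> edge_minimal S -> ~ has_cycle ends S.
Proof. by move=> CS minS /cycle_edge_redundant/(_ CS)[g /minS/negP]. Qed.

Definition proper_piece S T v :=
  [&& T.2 \proper S.2, wf ends T, connectedb ends T & v \in T.1].

Section CutVertex.
Variables (S : sg V E) (v : V) (e f : E).
Hypotheses (wfS : wf ends S) (connS : connectedb ends S) (minS : edge_minimal S).
Hypotheses (Se : e \in S.2) (Sf : f \in S.2) (ef : e != f).
Hypotheses (ev : incident ends e v) (fv : incident ends f v).

(* [C] is the component of [S - v] containing the neighbour [u] of [v] along [e];
   the two pieces are [v + C] and the rest of [S]. *)
Let adjv : rel V := fun a b => [&& a != v, b != v & adj ends S a b].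
Let u := other_end ends e v.
Let C := [set w | connect adjv u w].
Let piece1 : sg V E :=
  (v |: C, [set h in S.2 | ((ends h).1 \in C) || ((ends h).2 \in C)]).
Let piece2 : sg V E := (S.1 :\: C, S.2 :\: piece1.2).

Let Jvu : joins ends e v u := joins_other_end ev.
Let Juv : joins ends e u v. Proof. by rewrite joinsC. Qed.

Let Sv : v \in S.1.
Proof.
have Svu : adj ends S v u by apply/existsP; exists e; rewrite Se Jvu.
by have /andP[] := wf_adj wfS Svu.
Qed.

Let uC : u \in C. Proof. by rewrite inE connect0. Qed.

Let C_neq w : w \in C -> w != v.
Proof.
rewrite inE => /connectP[p P ->]; have := joins_neq noloop Jvu; rewrite eq_sym.
by elim: p u P => //= b p IH a /andP[/and3P[_ bv _] P] _; apply: IH.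
Qed.

Let vC : v \notin C. Proof. by apply/negP => /C_neq; rewrite eqxx. Qed.

Let C_closed w b : w \in C -> adj ends S w b -> b != v -> b \in C.
Proof.
move=> Cw wb bv; have wv := C_neq Cw; move: Cw; rewrite !inE => Cw.
by apply: connect_trans Cw (connect1 _); rewrite /adjv wv bv wb.
Qed.

Let piece1_edge h a b : h \in S.2 -> joins ends h a b -> a \in C -> h \in piece1.2.
Proof. by move=> Sh J Ca; rewrite inE Sh (joins_mem _ J) Ca. Qed.

(* Otherwise [u] would reach [v] through [f], avoiding [e]. *)
Let other_end_notin_C : other_end ends f v \notin C.
Proof.
apply/negP => Cu'; apply: (negP (minS Se)).
apply: (connect_delete_edge Jvu) connS; rewrite connectC.
apply: (@connect_trans _ _ (other_end ends f v)).
  move: Cu'; rewrite inE; apply: connect_sub => a b /and3P[av bv /existsP[h /andP[Sh J]]].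
  apply/connect1/existsP; exists h; rewrite !inE Sh J !andbT.
  apply/eqP => he; subst h.
  by case: (incident_joins J ev) => Ev; [move: av | move: bv]; rewrite Ev eqxx.
apply/connect1/existsP; exists f; rewrite !inE Sf joinsC joins_other_end // !andbT.
by rewrite eq_sym.
Qed.

Let wf_piece1 : wf ends piece1.
Proof.
have end_in h a b : h \in S.2 -> joins ends h a b -> a \in C -> b \in v |: C.
  move=> Sh J Ca; rewrite in_setU1; case: eqVneq => //= bv.
  by apply: (C_closed Ca) => //; apply/existsP; exists h; rewrite Sh J.
apply/forall_inP => h /=; rewrite inE => /andP[Sh /orP[h1|h2]].
  by rewrite (end_in h _ _ Sh (joins_ends ends h) h1) in_setU1 h1 orbT.
have J : joins ends h (ends h).2 (ends h).1 by rewrite joinsC joins_ends.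
by rewrite (end_in _ _ _ Sh J h2) in_setU1 h2 orbT.
Qed.

Let connected_piece1 : connectedb ends piece1.
Proof.
apply: (@connectedb_from _ _ _ _ u) => w /=; rewrite in_setU1 => /orP[/eqP->|].
  by apply/connect1/existsP; exists e; rewrite Juv (piece1_edge Se Juv uC).
rewrite inE => /connectP[p P ->].
elim: p u uC P => [|b p IH] a Ca //= /andP[/and3P[_ bv ab] P].
have Cb : b \in C by apply: C_closed ab bv.
apply: connect_trans (IH b Cb P); move: ab => /existsP[h /andP[Sh J]].
by apply/connect1/existsP; exists h; rewrite J (piece1_edge Sh J Ca).
Qed.

Let wf_piece2 : wf ends piece2.
Proof.
apply/forall_inP => h /=; rewrite !inE => /andP[+ Sh]; rewrite Sh => /norP[h1 h2].
by have /andP[-> ->] := forall_inP wfS h Sh; rewrite h1 h2.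
Qed.

(* A walk from outside [C] to [v] stays outside [C] until it reaches [v]. *)
Let connected_piece2 : connectedb ends piece2.
Proof.
apply: (@connectedb_from _ _ _ _ v) => w /=; rewrite in_setD => /andP[wC Sw].
have /connectP[p P Ev] := forall_inP (forall_inP connS w Sw) v Sv.
rewrite connectC; elim: p w wC P Ev {Sw} => [|b p IH] a aC /=; first by move=> _ ->.
case/andP=> ab P Ev; case: (eqVneq a v) => [->|av]; first exact: connect0.
have bC : b \notin C.
  case: (eqVneq b v) => [->//|bv]; apply: contra aC => Cb.
  by apply: (C_closed Cb) => //; rewrite adjC.
apply: connect_trans (IH b bC P Ev); move: ab => /existsP[h /andP[Sh J]].
apply/connect1/existsP; exists h; rewrite J in_setD Sh andbT in_set Sh.
by rewrite (joins_mem _ J) negb_or aC bC.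
Qed.

Lemma cut_at_edges : exists T1 T2, [/\ proper_piece S T1 v, proper_piece S T2 v,
  S.1 \subset T1.1 :|: T2.1 & T2.2 = S.2 :\: T1.2].
Proof.
have sub1 : piece1.2 \subset S.2 by apply/subsetP => h; rewrite inE => /andP[].
exists piece1, piece2; split => //.
- rewrite /proper_piece wf_piece1 connected_piece1 setU11 !andbT.
  apply/properP; split => //; exists f => //; rewrite inE Sf.
  by rewrite (joins_mem _ (joins_other_end fv)) (negbTE vC) (negbTE other_end_notin_C).
- rewrite /proper_piece wf_piece2 connected_piece2 /= in_setD vC Sv !andbT.
  by apply/properP; split; [exact: subsetDl | exists e; rewrite // inE (piece1_edge Se Juv uC)].
- apply/subsetP => w Sw; rewrite /= in_setU in_setU1 in_setD Sw andbT.
  by case: (w \in C); rewrite ?orbT.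
Qed.

End CutVertex.

Lemma cut_vertex_split S v : wf ends S -> connectedb ends S -> edge_minimal S ->
  (1 < deg ends S v)%N -> exists T1 T2, [/\ proper_piece S T1 v, proper_piece S T2 v,
  S.1 \subset T1.1 :|: T2.1 & T2.2 = S.2 :\: T1.2].
Proof.
move=> wfS connS minS /card_gt1P[e [f [+ + ef]]]; rewrite !inE => /andP[Se ev] /andP[Sf fv].
exact: (cut_at_edges wfS connS minS Se Sf ef ev fv).
Qed.

End Surgery.

Section MinimalShortcut.
Variables (R : realFieldType) (V E : finType) (ends : E -> V * V).
Hypothesis noloop : forall e, (ends e).1 != (ends e).2.
Variables (l : E -> R) (k : nat) (H : sg V E).
Hypothesis lpos : forall e, 0 < l e.
Hypothesis HG : subg ends H (Gfull V E).
Implicit Types (A : {set V}) (S : sg V E).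

Let G := Gfull V E.

Definition shortcut A S :=
  [&& A \subset H.1, (#|A| <= k)%N, cand ends G A S & olt (Some (len l S)) (sd ends l H A)].

Lemma cand_full A S : wf ends S -> connectedb ends S -> A \subset S.1 -> cand ends G A S.
Proof. by move=> W C AS; rewrite /cand /subg W C AS !subsetT. Qed.

Lemma cand_H_full A S : cand ends H A S -> cand ends G A S.
Proof. by case/and3P => /and3P[W _ _] C AS; apply: cand_full. Qed.

Lemma exists_shortcut : ~ k_geodesic ends l k H G ->
  exists A S, shortcut A S.
Proof.
move=> NG; have [/existsP[[A S] sh]|none] := boolP [exists p, shortcut p.1 p.2].
  by exists A, S.
case: NG => A AH Ak.
have {}none S : ~~ olt (Some (len l S)) (sd ends l H A) \/ ~~ cand ends G A S.
  case CS: (cand ends G A S); [left | by right].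
  by apply: contra none => lt; apply/existsP; exists (A, S); rewrite /shortcut AH Ak CS lt.
case EG: (sd ends l G A) => [m|].
  have [S -> [CS minS]] := sd_Some EG.
  have [|] := none S; last by rewrite CS.
  case/nolt_Some => m' EH m'S; rewrite EH; congr Some.
  have [S' Em' [CS' _]] := sd_Some EH; rewrite Em' in m'S *.
  by apply/eqP; rewrite eq_le m'S minS ?cand_H_full.
case EH: (sd ends l H A) => [m'|] //; have [S' _ [CS' _]] := sd_Some EH.
by have := sd_None S' EG; rewrite cand_H_full.
Qed.

Lemma exists_minimal_shortcut : ~ k_geodesic ends l k H G ->
  exists A T, shortcut A T /\
    forall A' S', shortcut A' S' -> (#|T.2| <= #|S'.2|)%N.
Proof.
case/exists_shortcut => A [S sh].
have [[A0 T] /= shT minT] :=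
  arg_minP (P := fun p : {set V} * sg V E => shortcut p.1 p.2) (i0 := (A, S)) (fun p => #|p.2.2|) sh.
by exists A0, T; split => // A' S' sh'; apply: (minT (A', S')).
Qed.

Section Minimal.
Variables (A : {set V}) (T : sg V E).
Hypothesis shT : shortcut A T.
Hypothesis minT : forall A' S', shortcut A' S' -> (#|T.2| <= #|S'.2|)%N.

Let AH : A \subset H.1. Proof. by case/and4P: shT. Qed.
Let Ak : (#|A| <= k)%N. Proof. by case/and4P: shT. Qed.
Let wfT : wf ends T. Proof. by case/and4P: shT => _ _ /and3P[/and3P[]]. Qed.
Let connT : connectedb ends T. Proof. by case/and4P: shT => _ _ /and3P[]. Qed.
Let AT : A \subset T.1. Proof. by case/and4P: shT => _ _ /and3P[]. Qed.
Let ltT : olt (Some (len l T)) (sd ends l H A). Proof. by case/and4P: shT. Qed.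

Lemma cand_H_longer S : cand ends H A S -> len l T < len l S.
Proof.
move=> CS; have [S0 E0 [_ min0]] := sd_attained l CS.
by move: ltT; rewrite E0 => /lt_le_trans; apply; apply: min0.
Qed.

Lemma fewer_edges_not_shortcut A' S' : (#|S'.2| < #|T.2|)%N ->
  A' \subset H.1 -> (#|A'| <= k)%N -> cand ends G A' S' ->
  ~~ olt (Some (len l S')) (sd ends l H A').
Proof.
move=> lt A'H A'k CS'; apply/negP => lt'.
by have := minT (A' := A') (S' := S'); rewrite /shortcut A'H A'k CS' lt' leqNgt lt => /(_ isT).
Qed.

Lemma no_proper_connector S : S.2 \proper T.2 -> wf ends S -> connectedb ends S ->
  ~~ (A \subset S.1).
Proof.
move=> ST W C; apply/negP => AS.
have := fewer_edges_not_shortcut (proper_card ST) AH Ak (cand_full W C AS).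
by rewrite (le_olt_trans (ltW (len_proper lpos ST))).
Qed.

Lemma edge_minimal_T : edge_minimal ends T.
Proof.
move=> e Te; apply/negP => C.
have W : wf ends (T.1, T.2 :\ e).
  by apply/forall_inP => h /setD1P[_ Th]; apply: (forall_inP wfT).
by have /negP := no_proper_connector (S := (T.1, T.2 :\ e)) (properD1 Te) W C; apply.
Qed.

Lemma exists_edge_T : exists e, e \in T.2.
Proof.
have [T0|[e Te]] := set_0Vmem T.2; last by exists e.
have C0 a b : connect (adj ends T) a b -> a = b.
  by case/connectP=> [[|c p] //= /andP[/existsP[h /andP[]]]]; rewrite T0 inE.
have : cand ends H A (A, set0).
  rewrite /cand /subg /= AH sub0set subxx !andbT; apply/andP; split.
    by apply/forall_inP => h; rewrite inE.
  apply/forall_inP => a Aa; apply/forall_inP => b Ab.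
  by rewrite (C0 a b (forall_inP (forall_inP connT a (subsetP AT a Aa)) b (subsetP AT b Ab))).
by move/cand_H_longer; rewrite /len T0 !big_set0 ltxx.
Qed.

Lemma leaves_sub_A : leaves ends T \subset A.
Proof.
apply/subsetP => x; rewrite inE => /andP[Tx /eqP x1]; apply: contraT => xA.
have [g Tg gx] := deg1_edge x1.
have /negP[] := no_proper_connector (S := (T.1 :\ x, T.2 :\ g)) (properD1 Tg)
  (wf_delete_leaf x1 Tg gx wfT) (connected_delete_leaf noloop x1 Tg gx connT).
apply/subsetP => a Aa; rewrite !inE (subsetP AT a Aa) andbT.
by apply: contraNneq xA => <-.
Qed.

Lemma piece_connector Ti v : v \in H.1 -> proper_piece ends T Ti v ->
  exists2 Si, cand ends H (v |: (A :&: Ti.1)) Si & len l Si <= len l Ti.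
Proof.
move=> Hv /and4P[TiT Wi Ci vi].
have /subsetPn[a Aa aTi] := no_proper_connector TiT Wi Ci.
have AiH : v |: (A :&: Ti.1) \subset H.1.
  by rewrite subUset sub1set Hv (subset_trans (subsetIl _ _) AH).
have Aik : (#|v |: (A :&: Ti.1)| <= k)%N.
  rewrite cardsU1; apply: leq_trans Ak; apply: leq_trans (_ : #|A :&: Ti.1| < #|A|)%N.
    by rewrite -add1n leq_add2r leq_b1.
  by apply/proper_card/properP; split; [exact: subsetIl | exists a; rewrite // inE Aa (negbTE aTi)].
have AiTi : v |: (A :&: Ti.1) \subset Ti.1 by rewrite subUset sub1set vi subsetIr.
have /nolt_Some[m Em mTi] :=
  fewer_edges_not_shortcut (proper_card TiT) AiH Aik (cand_full Wi Ci AiTi).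
by have [Si mSi [CSi _]] := sd_Some Em; exists Si; rewrite // -mSi.
Qed.

Lemma H_vertex_leaf v : v \in T.1 -> v \in H.1 -> v \in leaves ends T.
Proof.
move=> Tv Hv; rewrite inE Tv /=; apply/negPn/negP => v1.
have [e Te] := exists_edge_T.
have v2 : (1 < deg ends T v)%N.
  by rewrite ltn_neqAle eq_sym v1 (connected_deg_gt0 noloop wfT connT Te Tv).
have [T1 [T2 [P1 P2 cover T2E]]] := cut_vertex_split noloop wfT connT (@edge_minimal_T) v2.
have [S1 C1 le1] := piece_connector Hv P1.
have [S2 C2 le2] := piece_connector Hv P2.
have vS1 : v \in S1.1 by case/and3P: C1 => _ _ /subsetP; apply; rewrite setU11.
have vS2 : v \in S2.1 by case/and3P: C2 => _ _ /subsetP; apply; rewrite setU11.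
have : cand ends H A (sgU S1 S2).
  apply: cand_subset (cand_sgU vS1 vS2 C1 C2); apply/subsetP => a Aa.
  by have := subsetP cover a (subsetP AT a Aa); rewrite !inE Aa => /orP[] ->; rewrite ?orbT.
move/cand_H_longer; rewrite ltNge => /negP; apply; apply: le_trans (len_sgU lpos S1 S2) _.
have T1T : T1.2 \subset T.2 by case/and4P: P1 => /proper_sub.
by rewrite (len_setID l T T1.2) (setIidPr T1T) -T2E lerD.
Qed.

Lemma leaves_eq_A : leaves ends T = A.
Proof.
apply/eqP; rewrite eqEsubset leaves_sub_A; apply/subsetP => a Aa.
exact: H_vertex_leaf (subsetP AT a Aa) (subsetP AH a Aa).
Qed.

Lemma leaf_deg x : x \in leaves ends T -> deg ends T x = 1%N.
Proof. by rewrite inE => /andP[_ /eqP]. Qed.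

Lemma T_meets_H_in_leaves : T.1 :&: H.1 = leaves ends T.
Proof.
apply/eqP; rewrite eqEsubset; apply/andP; split.
  by apply/subsetP => x /setIP[]; apply: H_vertex_leaf.
by rewrite leaves_eq_A subsetI AT AH.
Qed.

(* Both ends of a common edge would be leaves, so [T] would be that single edge,
   which lies in [H] and is no longer than [T]. *)
Lemma T_H_edge_disjoint : T.2 :&: H.2 = set0.
Proof.
apply/setP => g; rewrite !inE; apply/negP => /andP[Tg Hg].
have wfH : wf ends H by case/and3P: HG.
have /andP[Tx Ty] := forall_inP wfT g Tg; have /andP[Hx Hy] := forall_inP wfH g Hg.
have Txy := leaf_edge_spans noloop connT Tx (leaf_deg (H_vertex_leaf Tx Hx))
  (leaf_deg (H_vertex_leaf Ty Hy)) Tg (joins_ends ends g).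
move: (cand_subset (subset_trans AT Txy) (cand_edge wfH Hg)).
move/cand_H_longer; rewrite /len /= big_set1 ltNge => /negP; apply.
by have := sum_subset_le lpos (X := [set g]) (Y := T.2); rewrite sub1set Tg big_set1; apply.
Qed.

Lemma sd_H_le_sd_T (B : {set V}) : B \proper leaves ends T -> ole (sd ends l H B) (sd ends l T B).
Proof.
rewrite leaves_eq_A => /properP[BA [x Ax xB]].
have x1 : deg ends T x = 1%N by apply: leaf_deg; rewrite leaves_eq_A.
have [g Tg gx] := deg1_edge x1.
have CT' : cand ends T B (T.1 :\ x, T.2 :\ g).
  rewrite /cand /subg wf_delete_leaf // connected_delete_leaf //= subsetDl subD1set /=.
  apply/subsetP => b Bb; rewrite !inE (subsetP AT b (subsetP BA b Bb)) andbT.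
  by apply: contraNneq xB => <-.
have [S0 -> [CS0 min0]] := sd_attained l CT'.
apply: nolt_ole; case/and3P: CS0 => /and3P[W0 _ S0T] C0 BS0.
have [S0P|] := boolP (S0.2 \proper T.2).
  apply: fewer_edges_not_shortcut (proper_card S0P) _ _ (cand_full W0 C0 BS0).
  - exact: subset_trans BA AH.
  - exact: leq_trans (subset_leq_card BA) Ak.
rewrite properEneq S0T andbT negbK => /eqP S0E.
have := min0 _ CT'; rewrite leNgt => /negP[].
by rewrite /len S0E; apply: (len_proper lpos (S' := T)); exact: properD1 Tg.
Qed.

Lemma minimal_shortcut_tree :
  [/\ subg ends T G, is_tree ends T, (#|leaves ends T| <= k)%N & shortcut_tree ends l T H].
Proof.
have treeT : is_tree ends T.
  split => //; last exact: (edge_minimal_acyclic noloop connT (@edge_minimal_T)).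
  have [e Te] := exists_edge_T; have /andP[Te1 _] := forall_inP wfT e Te.
  by apply/set0Pn; exists (ends e).1.
split => //; first by case/and4P: shT => _ _ /and3P[].
  by rewrite leaves_eq_A.
split => //.
- exact: T_meets_H_in_leaves.
- exact: T_H_edge_disjoint.
- by rewrite leaves_eq_A.
- exact: sd_H_le_sd_T.
Qed.

End Minimal.
End MinimalShortcut.

Theorem lemma3p1 (R : realFieldType) (V E : finType) (ends : E -> V * V)
  (noloop : forall e : E, (ends e).1 != (ends e).2)
  (l : E -> R) (lpos : forall e : E, 0 < l e)
  (k : nat) (H : sg V E) (HG : subg ends H (Gfull V E)) :
  ~ k_geodesic ends l k H (Gfull V E) ->
  exists T : sg V E,
    [/\ subg ends T (Gfull V E), is_tree ends T, (#|leaves ends T| <= k)%N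
      & shortcut_tree ends l T H].
Proof.
case/exists_minimal_shortcut => A [T [shT minT]].
by exists T; exact: (minimal_shortcut_tree noloop lpos HG shT minT).
Qed.
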